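(* For any natural number $n \geq 1$, $\{\omega \cdot n, \omega^\star \cdot n\} \leq_c \{\omega^2 \cdot n, (\omega^2)^\star \cdot n\}$.
   Context: Structures have domains contained in $\omega$. For countable structures $\mathcal{A},\mathcal{B}$, the class $\{\mathcal{A},\mathcal{B}\}$ denotes the class of all structures (with domain $\subseteq\omega$) isomorphic to $\mathcal{A}$ or to $\mathcal{B}$. Linear orders are in the language $\{<\}$; $L^\star$ is the reverse of a linear order $L$; $\omega\cdot n$, $\omega^2\cdot n$ are ordinal order types. An enumeration operator $\Gamma$ is a c.e. set of pairs $(\alpha,\varphi)$ with $\alpha$ a finite set of basic (atomic or negated atomic) sentences of the input language with constants from $\omega$ and $\varphi$ a basic sentence of the output language with constants from $\omega$; $\Gamma(X)=\{\varphi : (\alpha,\varphi)\in\Gamma,\ \alpha\subseteq X\}$. $\Gamma$ is a computable embedding of $\mathcal{K}_0$ into $\mathcal{K}_1$ ($\mathcal{K}_0\leq_c\mathcal{K}_1$) if for every $\mathcal{A}\in\mathcal{K}_0$, $\Gamma$ applied to the atomic diagram of $\mathcal{A}$ is the atomic diagram of a structure $\Gamma(\mathcal{A})\in\mathcal{K}_1$, and for all $\mathcal{A},\mathcal{B}\in\mathcal{K}_0$, $\mathcal{A}\cong\mathcal{B}$ iff $\Gamma(\mathcal{A})\cong\Gamma(\mathcal{B})$. *)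

From Stdlib Require Import Arith List.
Import ListNotations.

Inductive prf : Type :=
| PZero : prf
| PSucc : prf
| PProj : nat -> prf
| PComp : prf -> list prf -> prf
| PRec  : prf -> prf -> prf
| PMu   : prf -> prf.

Inductive eval : prf -> list nat -> nat -> Prop :=
| ev_zero : forall v, eval PZero v 0
| ev_succ : forall x v, eval PSucc (x :: v) (S x)
| ev_proj : forall i v, i < length v -> eval (PProj i) v (nth i v 0)
| ev_comp : forall f gs v ws y,
    evals gs v ws -> eval f ws y -> eval (PComp f gs) v y
| ev_rec0 : forall f g v y, eval f v y -> eval (PRec f g) (0 :: v) y
| ev_recS : forall f g n v z y,
    eval (PRec f g) (n :: v) z -> eval g (n :: z :: v) y ->
    eval (PRec f g) (S n :: v) y
| ev_mu : forall f v n,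
    eval f (n :: v) 0 ->
    (forall m, m < n -> exists k, eval f (m :: v) (S k)) ->
    eval (PMu f) v n
with evals : list prf -> list nat -> list nat -> Prop :=
| evs_nil : forall v, evals [] v []
| evs_cons : forall g gs v w ws,
    eval g v w -> evals gs v ws -> evals (g :: gs) v (w :: ws).

Definition ce (A : nat -> Prop) : Prop :=
  exists p : prf, forall x, A x <-> exists y, eval p [x] y.

Inductive lit : Type :=
| LEq  : nat -> nat -> lit
| LNEq : nat -> nat -> lit
| LLt  : nat -> nat -> lit
| LNLt : nat -> nat -> lit.

Definition cpair (a b : nat) : nat := (a + b) * (a + b + 1) / 2 + b.

Definition code_lit (l : lit) : nat :=
  match l with
  | LEq a b  => cpair 0 (cpair a b)
  | LNEq a b => cpair 1 (cpair a b)
  | LLt a b  => cpair 2 (cpair a b)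
  | LNLt a b => cpair 3 (cpair a b)
  end.

Fixpoint code_list (s : list lit) : nat :=
  match s with
  | [] => 0
  | l :: s' => S (cpair (code_lit l) (code_list s'))
  end.

Definition code_pair (alpha : list lit) (phi : lit) : nat :=
  cpair (code_list alpha) (code_lit phi).

Record ostr : Type := Ostr { dom : nat -> Prop; rel : nat -> nat -> Prop }.

Definition diag (S : ostr) (l : lit) : Prop :=
  match l with
  | LEq a b  => dom S a /\ dom S b /\ a = b
  | LNEq a b => dom S a /\ dom S b /\ a <> b
  | LLt a b  => dom S a /\ dom S b /\ rel S a b
  | LNLt a b => dom S a /\ dom S b /\ ~ rel S a b
  end.

Definition iso_to (S : ostr) (T : Type) (r : T -> T -> Prop) : Prop :=
  exists f : nat -> T,
    (forall x y, dom S x -> dom S y -> f x = f y -> x = y) /\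
    (forall t, exists x, dom S x /\ f x = t) /\
    (forall x y, dom S x -> dom S y -> (rel S x y <-> r (f x) (f y))).

Definition iso (S S' : ostr) : Prop :=
  iso_to S {x : nat | dom S' x} (fun a b => rel S' (proj1_sig a) (proj1_sig b)).

Definition class2 (T1 : Type) (r1 : T1 -> T1 -> Prop)
                  (T2 : Type) (r2 : T2 -> T2 -> Prop) (S : ostr) : Prop :=
  iso_to S T1 r1 \/ iso_to S T2 r2.

Definition enum_apply (W : nat -> Prop) (X : lit -> Prop) (phi : lit) : Prop :=
  exists alpha : list lit, W (code_pair alpha phi) /\ forall l, In l alpha -> X l.

Definition is_diag_of (X : lit -> Prop) (S : ostr) : Prop :=
  forall l, X l <-> diag S l.

Definition computable_embedding (W : nat -> Prop) (K0 K1 : ostr -> Prop) : Prop :=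
  ce W /\
  (forall A, K0 A -> exists B, K1 B /\ is_diag_of (enum_apply W (diag A)) B) /\
  (forall A B A' B', K0 A -> K0 B ->
     is_diag_of (enum_apply W (diag A)) A' ->
     is_diag_of (enum_apply W (diag B)) B' ->
     (iso A B <-> iso A' B')).

Definition comp_leq (K0 K1 : ostr -> Prop) : Prop :=
  exists W, computable_embedding W K0 K1.

Definition fin (n : nat) : Type := {i : nat | i < n}.

Definition lex2 (p q : nat * nat) : Prop :=
  fst p < fst q \/ (fst p = fst q /\ snd p < snd q).

Definition omega_n (n : nat) : Type := (fin n * nat)%type.
Definition omega_n_lt (n : nat) (x y : omega_n n) : Prop :=
  proj1_sig (fst x) < proj1_sig (fst y) \/
  (proj1_sig (fst x) = proj1_sig (fst y) /\ snd x < snd y).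

Definition omega_star_n_lt (n : nat) (x y : omega_n n) : Prop :=
  proj1_sig (fst x) < proj1_sig (fst y) \/
  (proj1_sig (fst x) = proj1_sig (fst y) /\ snd y < snd x).

Definition omega2_n (n : nat) : Type := (fin n * (nat * nat))%type.
Definition omega2_n_lt (n : nat) (x y : omega2_n n) : Prop :=
  proj1_sig (fst x) < proj1_sig (fst y) \/
  (proj1_sig (fst x) = proj1_sig (fst y) /\ lex2 (snd x) (snd y)).

Definition omega2_star_n_lt (n : nat) (x y : omega2_n n) : Prop :=
  proj1_sig (fst x) < proj1_sig (fst y) \/
  (proj1_sig (fst x) = proj1_sig (fst y) /\ lex2 (snd y) (snd x)).

(** The embedding sends a structure [A] to its lexicographic square [A * A], with
    the pair [(a, b)] coded by [cpair a b].  Order-type arithmetic gives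
    [(omega * n)^2 = omega^2 * n] and [(omega^* * n)^2 = (omega^2)^* * n], so the first
    class is mapped into the second.  In each class the two order types are told apart
    by the existence of a least element, and [A * A] has one iff [A] has; hence the map
    preserves and reflects isomorphism.  The diagram of [A * A] is enumerated from that
    of [A] by seven rule schemes; the codes of their instances form the zero set of an
    arithmetic expression with bounded products, searched by a mu-operator, so the
    operator is c.e. *)

From Stdlib Require Import Arith List Lia Cantor Wf_nat ProofIrrelevance IndefiniteDescription.
Import ListNotations.

Definition functional (p : prf) : Prop :=
  forall v y y', eval p v y -> eval p v y' -> y = y'.

Lemma functional_zero : functional PZero.
Proof. intros v y y' H H'; inversion H; inversion H'; congruence. Qed.

Lemma functional_succ : functional PSucc.
Proof. intros v y y' H H'; inversion H; inversion H'; congruence. Qed.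

Lemma functional_proj i : functional (PProj i).
Proof. intros v y y' H H'; inversion H; inversion H'; congruence. Qed.

Lemma evals_functional gs : Forall functional gs ->
  forall v ws ws', evals gs v ws -> evals gs v ws' -> ws = ws'.
Proof.
  induction 1 as [|g gs Hg _ IH]; intros v ws ws' H H'; inversion H; inversion H'; subst.
  - reflexivity.
  - f_equal; [eapply Hg | eapply IH]; eassumption.
Qed.

Lemma functional_comp f gs :
  functional f -> Forall functional gs -> functional (PComp f gs).
Proof.
  intros Hf Hgs v y y' H H'; inversion H; inversion H'; subst.
  assert (ws = ws0) as <- by (eapply evals_functional; eassumption).
  eapply Hf; eassumption.
Qed.

Lemma functional_rec f g : functional f -> functional g -> functional (PRec f g).
Proof.
  intros Hf Hg [|n v] y y' H H'; [inversion H|].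
  revert y y' H H'; induction n; intros y y' H H'; inversion H; inversion H'; subst.
  - eapply Hf; eassumption.
  - assert (z = z0) as <- by (eapply IHn; eassumption). eapply Hg; eassumption.
Qed.

Lemma functional_mu f : functional f -> functional (PMu f).
Proof.
  intros Hf v n n' H H'; inversion H as [| | | | | |? ? ? Hn Hlt]; subst;
    inversion H' as [| | | | | |? ? ? Hn' Hlt']; subst.
  destruct (lt_eq_lt_dec n n') as [[Hnn'|]|Hn'n]; [exfalso| assumption |exfalso].
  - destruct (Hlt' n Hnn') as [k Hk]. discriminate (Hf _ _ _ Hn Hk).
  - destruct (Hlt n' Hn'n) as [k Hk]. discriminate (Hf _ _ _ Hn' Hk).
Qed.

Fixpoint eval_functional (p : prf) : functional p :=
  match p with
  | PZero => functional_zero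
  | PSucc => functional_succ
  | PProj i => functional_proj i
  | PComp f gs =>
      functional_comp f gs (eval_functional f)
        ((fix all_functional gs : Forall functional gs :=
            match gs with
            | [] => Forall_nil _
            | g :: gs => Forall_cons g (eval_functional g) (all_functional gs)
            end) gs)
  | PRec f g => functional_rec f g (eval_functional f) (eval_functional g)
  | PMu f => functional_mu f (eval_functional f)
  end.

Lemma eval_proj i v y : nth i v 0 = y -> i < length v -> eval (PProj i) v y.
Proof. intros <- Hi. now constructor. Qed.

Lemma eval_comp1 f g v w y : eval g v w -> eval f [w] y -> eval (PComp f [g]) v y.
Proof. intros Hg Hf. econstructor; [repeat constructor; eassumption | exact Hf]. Qed.

Lemma eval_comp2 f g1 g2 v w1 w2 y :
  eval g1 v w1 -> eval g2 v w2 -> eval f [w1; w2] y -> eval (PComp f [g1; g2]) v y.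
Proof. intros H1 H2 Hf. econstructor; [repeat constructor; eassumption | exact Hf]. Qed.

Ltac solve_proj := apply eval_proj; [reflexivity | cbn; lia].

Definition P_add : prf := PRec (PProj 0) (PComp PSucc [PProj 1]).

Lemma eval_add x y : eval P_add [x; y] (x + y).
Proof.
  induction x as [|x IH].
  - apply ev_rec0. solve_proj.
  - eapply ev_recS; [exact IH|]. eapply eval_comp1; [solve_proj | constructor].
Qed.

Definition P_mul : prf := PRec PZero (PComp P_add [PProj 1; PProj 2]).

Lemma eval_mul x y : eval P_mul [x; y] (x * y).
Proof.
  induction x as [|x IH].
  - apply ev_rec0, ev_zero.
  - eapply ev_recS; [exact IH|]. rewrite Nat.mul_succ_l.
    eapply eval_comp2; [solve_proj | solve_proj | apply eval_add].
Qed.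

Definition P_pred : prf := PRec PZero (PProj 0).

Lemma eval_pred x : eval P_pred [x] (Nat.pred x).
Proof.
  induction x as [|x IH].
  - apply ev_rec0, ev_zero.
  - eapply ev_recS; [exact IH | solve_proj].
Qed.

Definition P_monus : prf := PRec (PProj 0) (PComp P_pred [PProj 1]).

Lemma eval_monus x y : eval P_monus [y; x] (x - y).
Proof.
  induction y as [|y IH].
  - apply ev_rec0. rewrite Nat.sub_0_r. solve_proj.
  - eapply ev_recS; [exact IH|]. replace (x - S y) with (Nat.pred (x - y)) by lia.
    eapply eval_comp1; [solve_proj | apply eval_pred].
Qed.

Fixpoint tri (s : nat) : nat := match s with 0 => 0 | S s' => S s' + tri s' end.

Definition P_tri : prf := PRec PZero (PComp P_add [PComp PSucc [PProj 0]; PProj 1]).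

Lemma eval_tri s : eval P_tri [s] (tri s).
Proof.
  induction s as [|s IH].
  - apply ev_rec0, ev_zero.
  - eapply ev_recS; [exact IH|].
    eapply eval_comp2; [| solve_proj | apply eval_add].
    eapply eval_comp1; [solve_proj | constructor].
Qed.

Lemma cpair_tri a b : cpair a b = tri (a + b) + b.
Proof.
  assert (Htri : forall s, s * (s + 1) = tri s * 2) by (induction s; cbn [tri]; lia).
  unfold cpair. now rewrite Htri, Nat.div_mul.
Qed.

Lemma cpair_to_nat a b : cpair a b = to_nat (a, b).
Proof.
  now rewrite cpair_tri, Nat.add_comm, (Nat.add_comm a b).
Qed.

Lemma cpair_inj a b c d : cpair a b = cpair c d -> a = c /\ b = d.
Proof. rewrite !cpair_to_nat. intros H. apply to_nat_inj in H. now injection H. Qed.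

Lemma of_nat_cpair a b : of_nat (cpair a b) = (a, b).
Proof. rewrite cpair_to_nat. apply cancel_of_to. Qed.

Arguments cpair : simpl never.

Lemma code_lit_inj l l' : code_lit l = code_lit l' -> l = l'.
Proof.
  destruct l, l'; cbn [code_lit]; intros (Htag & Hargs)%cpair_inj; try discriminate;
    apply cpair_inj in Hargs as [-> ->]; reflexivity.
Qed.

Lemma code_list_inj s s' : code_list s = code_list s' -> s = s'.
Proof.
  revert s'; induction s as [|l s IH]; intros [|l' s'] H; cbn [code_list] in H;
    try discriminate; [reflexivity|].
  injection H as (Hl & Hs)%cpair_inj. f_equal; auto using code_lit_inj.
Qed.

Lemma code_pair_inj alpha phi alpha' phi' :
  code_pair alpha phi = code_pair alpha' phi' -> alpha = alpha' /\ phi = phi'.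
Proof. intros (? & ?)%cpair_inj. auto using code_list_inj, code_lit_inj. Qed.

(** * Arithmetic expressions with bounded products *)

Inductive expr : Type :=
| EVar (i : nat)
| EZero
| ESucc (e : expr)
| EAdd (e1 e2 : expr)
| EMul (e1 e2 : expr)
| EMonus (e1 e2 : expr)
| EPair (e1 e2 : expr)
| EProd (bound body : expr).

Fixpoint prod_below (m : nat) (f : nat -> nat) : nat :=
  match m with 0 => 1 | S m' => prod_below m' f * f m' end.

(** De Bruijn indices: [EProd bound body] is the product of [body] over [EVar 0 < bound]. *)
Fixpoint denote (e : expr) (v : list nat) : nat :=
  match e with
  | EVar i => nth i v 0
  | EZero => 0
  | ESucc e => S (denote e v)
  | EAdd e1 e2 => denote e1 v + denote e2 v
  | EMul e1 e2 => denote e1 v * denote e2 v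
  | EMonus e1 e2 => denote e1 v - denote e2 v
  | EPair e1 e2 => cpair (denote e1 v) (denote e2 v)
  | EProd bound body => prod_below (denote bound v) (fun i => denote body (i :: v))
  end.

Fixpoint closed_below (k : nat) (e : expr) : bool :=
  match e with
  | EVar i => i <? k
  | EZero => true
  | ESucc e => closed_below k e
  | EAdd e1 e2 | EMul e1 e2 | EMonus e1 e2 | EPair e1 e2 =>
      closed_below k e1 && closed_below k e2
  | EProd bound body => closed_below k bound && closed_below (S k) body
  end.

Definition P_prod_below (k : nat) (body : prf) : prf :=
  PRec (PComp PSucc [PZero])
       (PComp P_mul [PProj 1; PComp body (PProj 0 :: map PProj (seq 2 k))]).

Fixpoint compile (k : nat) (e : expr) : prf :=
  match e with
  | EVar i => PProj i
  | EZero => PZero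
  | ESucc e => PComp PSucc [compile k e]
  | EAdd e1 e2 => PComp P_add [compile k e1; compile k e2]
  | EMul e1 e2 => PComp P_mul [compile k e1; compile k e2]
  | EMonus e1 e2 => PComp P_monus [compile k e2; compile k e1]
  | EPair e1 e2 =>
      PComp P_add [PComp P_tri [PComp P_add [compile k e1; compile k e2]]; compile k e2]
  | EProd bound body =>
      PComp (P_prod_below k (compile (S k) body)) (compile k bound :: map PProj (seq 0 k))
  end.

Lemma evals_projs v pre : evals (map PProj (seq (length pre) (length v))) (pre ++ v) v.
Proof.
  revert pre; induction v as [|x v IH]; intros pre; constructor.
  - apply eval_proj; [now rewrite nth_middle | rewrite length_app; cbn; lia].
  - specialize (IH (pre ++ [x])). rewrite <- app_assoc, length_app, Nat.add_comm in IH.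
    exact IH.
Qed.

Lemma eval_prod_below k body f v :
  length v = k -> (forall i, eval body (i :: v) (f i)) ->
  forall m, eval (P_prod_below k body) (m :: v) (prod_below m f).
Proof.
  intros Hv Hbody m; induction m as [|m IH].
  - apply ev_rec0. eapply eval_comp1; constructor.
  - eapply ev_recS; [exact IH|]. eapply eval_comp2; [solve_proj | | apply eval_mul].
    econstructor; [constructor; [solve_proj|] | apply Hbody].
    pose proof (evals_projs v [m; prod_below m f]) as Hp. now rewrite Hv in Hp.
Qed.

Lemma compile_correct e : forall k v,
  closed_below k e = true -> length v = k -> eval (compile k e) v (denote e v).
Proof.
  induction e; intros k v Hc Hv; cbn [closed_below] in Hc; cbn [compile denote];
    repeat match goal with H : (_ && _)%bool = true |- _ => apply andb_prop in H as [? ?] end.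
  - apply eval_proj; [reflexivity | apply Nat.ltb_lt in Hc; lia].
  - constructor.
  - eapply eval_comp1; [eauto | constructor].
  - eapply eval_comp2; [eauto | eauto | apply eval_add].
  - eapply eval_comp2; [eauto | eauto | apply eval_mul].
  - eapply eval_comp2; [eauto | eauto | apply eval_monus].
  - rewrite cpair_tri. eapply eval_comp2; [| eauto | apply eval_add].
    eapply eval_comp1; [eapply eval_comp2; [eauto | eauto | apply eval_add] | apply eval_tri].
  - econstructor.
    + constructor; [eauto|].
      pose proof (evals_projs v []) as Hp. cbn in Hp. rewrite Hv in Hp. exact Hp.
    + apply eval_prod_below; [assumption|]. intros i. apply IHe2; cbn; auto.
Qed.

Lemma prod_below_eq_0 m f : prod_below m f = 0 <-> exists i, i < m /\ f i = 0.
Proof.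
  induction m as [|m IH]; cbn [prod_below].
  - split; [discriminate | intros [i [Hi _]]; lia].
  - rewrite Nat.mul_eq_0, IH. split.
    + intros [[i [Hi Hf]] | Hf]; [exists i | exists m]; split; auto; lia.
    + intros [i [Hi Hf]]. destruct (Nat.eq_dec i m) as [-> | Him]; [now right |].
      left. exists i. split; [lia | exact Hf].
Qed.

Lemma prod_below_ext m f g : (forall i, f i = g i) -> prod_below m f = prod_below m g.
Proof. intros Hfg. induction m as [|m IH]; cbn; congruence. Qed.

Lemma denote_app e : forall k v w,
  closed_below k e = true -> k <= length v -> denote e (v ++ w) = denote e v.
Proof.
  induction e; intros k v w Hc Hk; cbn [closed_below] in Hc; cbn [denote];
    repeat match goal with H : (_ && _)%bool = true |- _ => apply andb_prop in H as [? ?] end;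
    try (erewrite IHe by eassumption); try (erewrite IHe1 by eassumption);
    try (erewrite IHe2 by eassumption); try reflexivity.
  - apply Nat.ltb_lt in Hc. apply app_nth1. lia.
  - apply prod_below_ext. intros i. apply (IHe2 (S k) (i :: v)); cbn; auto with arith.
Qed.

Definition EDist (e1 e2 : expr) : expr := EAdd (EMonus e1 e2) (EMonus e2 e1).

Definition EMember (e : expr) (es : list expr) : expr :=
  fold_right (fun e' acc => EMul (EDist e e') acc) (ESucc EZero) es.

Lemma denote_member_eq_0 e es v :
  denote (EMember e es) v = 0 <-> exists e', In e' es /\ denote e v = denote e' v.
Proof.
  induction es as [|e' es IH]; cbn [EMember EDist fold_right denote].
  - split; [discriminate | intros [? [[] _]]].
  - fold (EMember e es). rewrite Nat.mul_eq_0, IH. split.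
    + intros [Hd | (e'' & Hin & Heq)].
      * exists e'. split; [now left | lia].
      * exists e''. split; [now right | exact Heq].
    + intros (e'' & [<- | Hin] & Heq); [left; lia | right; eauto].
Qed.

Lemma ce_ext (P Q : nat -> Prop) : (forall x, P x <-> Q x) -> ce P -> ce Q.
Proof. intros HPQ [p Hp]. exists p. intros x. rewrite <- HPQ. apply Hp. Qed.

Lemma ce_zero_search e :
  closed_below 2 e = true -> ce (fun x => exists y, denote e [y; x] = 0).
Proof.
  intros He. exists (PMu (compile 2 e)). intros x. split.
  - intros Hex.
    destruct (dec_inh_nat_subset_has_unique_least_element (fun y => denote e [y; x] = 0))
      as [m [[Hm Hleast] _]]; [intros y; apply Nat.eq_decidable | exact Hex |].
    exists m. constructor.
    + pose proof (compile_correct e 2 [m; x] He eq_refl) as Hc. now rewrite Hm in Hc.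
    + intros k Hk. destruct (denote e [k; x]) as [|j] eqn:Hj.
      * specialize (Hleast k Hj). lia.
      * exists j. rewrite <- Hj. now apply compile_correct.
  - intros [y Hy]. inversion Hy as [| | | | | | ? ? ? Hy0 _]; subst. exists y.
    eapply eval_functional; [apply compile_correct; [exact He | reflexivity] | exact Hy0].
Qed.

(** * The operator enumerating the diagram of the lexicographic square *)

Inductive slit : Type :=
| SEq (s t : expr)
| SNEq (s t : expr)
| SLt (s t : expr)
| SNLt (s t : expr).

Definition inst_slit (v : list nat) (l : slit) : lit :=
  match l with
  | SEq s t => LEq (denote s v) (denote t v)
  | SNEq s t => LNEq (denote s v) (denote t v)
  | SLt s t => LLt (denote s v) (denote t v)
  | SNLt s t => LNLt (denote s v) (denote t v)
  end.

Definition slit_code (l : slit) : expr :=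
  match l with
  | SEq s t => EPair EZero (EPair s t)
  | SNEq s t => EPair (ESucc EZero) (EPair s t)
  | SLt s t => EPair (ESucc (ESucc EZero)) (EPair s t)
  | SNLt s t => EPair (ESucc (ESucc (ESucc EZero))) (EPair s t)
  end.

Fixpoint slits_code (ls : list slit) : expr :=
  match ls with
  | [] => EZero
  | l :: ls => ESucc (EPair (slit_code l) (slits_code ls))
  end.

Definition rule : Type := (list slit * slit)%type.

Definition rule_code (r : rule) : expr := EPair (slits_code (fst r)) (slit_code (snd r)).

Definition rule_instance_code (v : list nat) (r : rule) : nat :=
  code_pair (map (inst_slit v) (fst r)) (inst_slit v (snd r)).

Lemma denote_slit_code l v : denote (slit_code l) v = code_lit (inst_slit v l).
Proof. now destruct l. Qed.

Lemma denote_rule_code r v : denote (rule_code r) v = rule_instance_code v r.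
Proof.
  destruct r as [prem concl]. unfold rule_code, rule_instance_code, code_pair; cbn [denote fst snd].
  rewrite denote_slit_code. f_equal.
  induction prem as [|l prem IH]; cbn [slits_code denote map code_list]; [reflexivity|].
  now rewrite denote_slit_code, IH.
Qed.

(** [A] is an arbitrary structure, so its relation need not be irreflexive: the last
    rule needs the premise [SNLt a a]. *)
Definition square_rules : list rule :=
  let a := EVar 0 in let b := EVar 1 in let c := EVar 2 in let d := EVar 3 in
  let ab := EPair a b in let cd := EPair c d in let ad := EPair a d in
  [ ([SEq a a; SEq b b], SEq ab ab);
    ([SNEq a c; SEq b b; SEq d d], SNEq ab cd);
    ([SNEq b d; SEq a a; SEq c c], SNEq ab cd);
    ([SLt a c; SEq b b; SEq d d], SLt ab cd);
    ([SEq a a; SLt b d], SLt ab ad);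
    ([SNLt a c; SNEq a c; SEq b b; SEq d d], SNLt ab cd);
    ([SNLt a a; SNLt b d], SNLt ab ad) ].

Definition square_operator (x : nat) : Prop :=
  exists r a b c d, In r square_rules /\ x = rule_instance_code [a; b; c; d] r.

(** Evaluated at [[y; x]]: the products range over [d, c, b, a < y], so under the four
    binders the environment is [[a; b; c; d; y; x]]. *)
Definition square_search : expr :=
  EProd (EVar 0) (EProd (EVar 1) (EProd (EVar 2) (EProd (EVar 3)
    (EMember (EVar 5) (map rule_code square_rules))))).

Lemma square_search_eq_0 y x :
  denote square_search [y; x] = 0 <->
  exists r a b c d, In r square_rules /\ a < y /\ b < y /\ c < y /\ d < y /\
    x = rule_instance_code [a; b; c; d] r.
Proof.
  assert (Hcode : forall r a b c d, In r square_rules ->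
    denote (rule_code r) [a; b; c; d; y; x] = rule_instance_code [a; b; c; d] r).
  { intros r a b c d Hr. rewrite <- denote_rule_code.
    apply (denote_app _ 4 [a; b; c; d] [y; x]); [|reflexivity].
    repeat destruct Hr as [<- | Hr]; [reflexivity .. | destruct Hr]. }
  unfold square_search. cbn [denote nth]. split.
  - intros (d & Hd & H)%prod_below_eq_0. apply prod_below_eq_0 in H as (c & Hc & H).
    apply prod_below_eq_0 in H as (b & Hb & H). apply prod_below_eq_0 in H as (a & Ha & H).
    apply denote_member_eq_0 in H as (e & (r & <- & Hr)%in_map_iff & Hx).
    exists r, a, b, c, d. rewrite <- Hcode by exact Hr. auto 6.
  - intros (r & a & b & c & d & Hr & Ha & Hb & Hc & Hd & Hx).
    apply prod_below_eq_0. exists d. split; [exact Hd|].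
    apply prod_below_eq_0. exists c. split; [exact Hc|].
    apply prod_below_eq_0. exists b. split; [exact Hb|].
    apply prod_below_eq_0. exists a. split; [exact Ha|].
    apply denote_member_eq_0. exists (rule_code r). split; [now apply in_map|].
    rewrite Hcode by exact Hr. exact Hx.
Qed.

Lemma ce_square_operator : ce square_operator.
Proof.
  apply (ce_ext (fun x => exists y, denote square_search [y; x] = 0));
    [| now apply ce_zero_search].
  intros x. split.
  - intros [y (r & a & b & c & d & Hr & _ & _ & _ & _ & Hx)%square_search_eq_0].
    now exists r, a, b, c, d.
  - intros (r & a & b & c & d & Hr & Hx). exists (S (a + b + c + d)).
    apply square_search_eq_0. exists r, a, b, c, d. repeat split; auto; lia.
Qed.

Definition lex_rel {T} (r : T -> T -> Prop) (p q : T * T) : Prop :=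
  r (fst p) (fst q) \/ (fst p = fst q /\ r (snd p) (snd q)).

Definition square (A : ostr) : ostr :=
  Ostr (fun x => exists a b, dom A a /\ dom A b /\ x = cpair a b)
       (fun x y => lex_rel (rel A) (of_nat x) (of_nat y)).

Lemma dom_square_cpair A a b : dom (square A) (cpair a b) <-> dom A a /\ dom A b.
Proof.
  split; [|intros [Ha Hb]; now exists a, b].
  intros (a' & b' & Ha & Hb & (-> & ->)%cpair_inj). auto.
Qed.

Lemma rel_square_cpair A a b c d :
  rel (square A) (cpair a b) (cpair c d) <-> rel A a c \/ (a = c /\ rel A b d).
Proof. cbn [rel square]. now rewrite !of_nat_cpair. Qed.

Lemma square_rules_sound A r a b c d :
  In r square_rules ->
  (forall l, In l (map (inst_slit [a; b; c; d]) (fst r)) -> diag A l) ->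
  diag (square A) (inst_slit [a; b; c; d] (snd r)).
Proof.
  intros Hr Hprem. apply Forall_forall in Hprem.
  repeat destruct Hr as [<- | Hr]; [.. | destruct Hr];
    cbn [fst snd map inst_slit denote nth] in Hprem |- *;
    repeat match goal with H : Forall _ (_ :: _) |- _ => inversion_clear H end;
    cbn [diag] in *; rewrite ?dom_square_cpair, ?rel_square_cpair;
    repeat split; try tauto; intros (? & ?)%cpair_inj; tauto.
Qed.

Ltac by_square_rule k a b c d :=
  exists (nth k square_rules ([], SEq EZero EZero)), a, b, c, d;
  split; [cbn; tauto | split; [reflexivity|]];
  intros l' Hl'; cbn in Hl'; repeat destruct Hl' as [<- | Hl']; [.. | destruct Hl']; cbn;
  repeat split; assumption.

Lemma square_rules_complete A l :
  diag (square A) l ->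
  exists r a b c d, In r square_rules /\ l = inst_slit [a; b; c; d] (snd r) /\
    forall l', In l' (map (inst_slit [a; b; c; d]) (fst r)) -> diag A l'.
Proof.
  destruct l as [x y | x y | x y | x y]; cbn [diag];
    intros ((a & b & Ha & Hb & ->) & (c & d & Hc & Hd & ->) & H); rewrite ?rel_square_cpair in H.
  - apply cpair_inj in H as [<- <-]. by_square_rule 0 a b a b.
  - destruct (Nat.eq_dec a c) as [<- | Hac].
    + assert (b <> d) by congruence. by_square_rule 2 a b a d.
    + by_square_rule 1 a b c d.
  - destruct H as [H | [<- H]]; [by_square_rule 3 a b c d | by_square_rule 4 a b a d].
  - destruct (Nat.eq_dec a c) as [<- | Hac].
    + assert (~ rel A a a /\ ~ rel A b d) as [? ?] by tauto. by_square_rule 6 a b a d.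
    + assert (~ rel A a c) by tauto. by_square_rule 5 a b c d.
Qed.

Lemma enum_square_operator A l :
  enum_apply square_operator (diag A) l <-> diag (square A) l.
Proof.
  split.
  - intros (alpha & (r & a & b & c & d & Hr & Hcode) & Halpha).
    apply code_pair_inj in Hcode as [-> ->]. now apply square_rules_sound.
  - intros (r & a & b & c & d & Hr & -> & Hprem)%square_rules_complete.
    exists (map (inst_slit [a; b; c; d]) (fst r)). split; [now exists r, a, b, c, d | exact Hprem].
Qed.

(** * Isomorphism invariants *)

Definition same_diag (S S' : ostr) : Prop := forall l, diag S l <-> diag S' l.

Lemma same_diag_sym S S' : same_diag S S' -> same_diag S' S.
Proof. intros Hd l. symmetry. apply Hd. Qed.

Lemma same_diag_enum_square A A' :
  is_diag_of (enum_apply square_operator (diag A)) A' -> same_diag (square A) A'.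
Proof. intros HA' l. rewrite <- enum_square_operator. apply HA'. Qed.

Lemma same_diag_dom S S' : same_diag S S' -> forall x, dom S x <-> dom S' x.
Proof. intros Hd x. split; intros Hx; apply (Hd (LEq x x)); cbn; auto. Qed.

Lemma same_diag_rel S S' : same_diag S S' ->
  forall x y, dom S x -> dom S y -> (rel S x y <-> rel S' x y).
Proof.
  intros Hd x y Hx Hy. pose proof (same_diag_dom S S' Hd) as Hdom. split; intros Hr.
  - now apply (Hd (LLt x y)).
  - apply (Hd (LLt x y)). cbn. rewrite <- !Hdom. auto.
Qed.

Lemma iso_to_same_diag S S' T r : same_diag S S' -> iso_to S T r -> iso_to S' T r.
Proof.
  intros Hd (f & Hinj & Hsurj & Hrel). pose proof (same_diag_dom S S' Hd) as Hdom.
  exists f. split; [|split].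
  - intros x y Hx Hy. apply Hinj; now apply Hdom.
  - intros t. destruct (Hsurj t) as (x & Hx & Hfx). exists x. now rewrite <- Hdom.
  - intros x y Hx Hy. apply Hdom in Hx, Hy. rewrite <- (same_diag_rel S S' Hd) by assumption.
    now apply Hrel.
Qed.

Lemma class2_same_diag T1 r1 T2 r2 S S' :
  same_diag S S' -> class2 T1 r1 T2 r2 S -> class2 T1 r1 T2 r2 S'.
Proof. intros Hd [HS | HS]; [left | right]; eapply iso_to_same_diag; eassumption. Qed.

Lemma iso_to_square A T r : iso_to A T r -> iso_to (square A) (T * T) (lex_rel r).
Proof.
  intros (f & Hinj & Hsurj & Hrel).
  exists (fun x => (f (fst (of_nat x)), f (snd (of_nat x)))). split; [|split].
  - intros x y (a & b & Ha & Hb & ->) (c & d & Hc & Hd & ->). rewrite !of_nat_cpair.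
    intros [= Hac Hbd]. apply Hinj in Hac, Hbd; [now subst | assumption ..].
  - intros [t1 t2]. destruct (Hsurj t1) as (a & Ha & <-), (Hsurj t2) as (b & Hb & <-).
    exists (cpair a b). split; [now exists a, b | now rewrite of_nat_cpair].
  - intros x y (a & b & Ha & Hb & ->) (c & d & Hc & Hd & ->).
    rewrite rel_square_cpair, !of_nat_cpair. unfold lex_rel; cbn [fst snd].
    rewrite !Hrel by assumption. split.
    + intros [H | [-> H]]; auto.
    + intros [H | [Hac H]]; [auto | right; split; [now apply Hinj | exact H]].
Qed.

Definition order_iso {T U} (r : T -> T -> Prop) (r' : U -> U -> Prop) (h : T -> U) : Prop :=
  (forall t t', h t = h t' -> t = t') /\ (forall u, exists t, h t = u) /\
  (forall t t', r t t' <-> r' (h t) (h t')).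

Lemma iso_to_order_iso S T r U r' (h : T -> U) :
  iso_to S T r -> order_iso r r' h -> iso_to S U r'.
Proof.
  intros (f & Hinj & Hsurj & Hrel) (hinj & hsurj & hrel).
  exists (fun x => h (f x)). split; [|split].
  - intros x y Hx Hy E. apply Hinj; auto.
  - intros u. destruct (hsurj u) as [t <-]. destruct (Hsurj t) as (x & Hx & <-). eauto.
  - intros x y Hx Hy. rewrite <- hrel. auto.
Qed.

Lemma iso_to_iso S S' T r : iso S S' -> iso_to S' T r -> iso_to S T r.
Proof.
  intros (g & Hinj & Hsurj & Hrel) (f & Hinj' & Hsurj' & Hrel').
  exists (fun x => f (proj1_sig (g x))). split; [|split].
  - intros x y Hx Hy E. apply Hinj; auto. apply Hinj' in E; try apply proj2_sig.
    destruct (g x), (g y); cbn in E; subst. f_equal. apply proof_irrelevance.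
  - intros t. destruct (Hsurj' t) as (y & Hy & <-). destruct (Hsurj (exist _ y Hy)) as (x & Hx & E).
    exists x. split; [exact Hx | now rewrite E].
  - intros x y Hx Hy. rewrite Hrel by assumption. apply Hrel'; apply proj2_sig.
Qed.

Lemma iso_of_iso_to S S' T r : iso_to S T r -> iso_to S' T r -> iso S S'.
Proof.
  intros (f & Hinj & Hsurj & Hrel) (f' & Hinj' & Hsurj' & Hrel').
  assert (G : forall x, {y | dom S' y /\ f' y = f x})
    by (intros x; apply constructive_indefinite_description, Hsurj').
  exists (fun x => exist _ (proj1_sig (G x)) (proj1 (proj2_sig (G x)))). split; [|split].
  - intros x y Hx Hy [= E].
    destruct (G x) as (x' & Hx' & Ex), (G y) as (y' & Hy' & Ey); cbn in E; subst y'.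
    apply Hinj; congruence.
  - intros [y Hy]. destruct (Hsurj (f' y)) as (x & Hx & Ex). exists x. split; [exact Hx|].
    destruct (G x) as (x' & Hx' & Ex'); cbn.
    assert (x' = y) as -> by (apply Hinj'; congruence). f_equal. apply proof_irrelevance.
  - intros x y Hx Hy. cbn. destruct (G x) as (x' & Hx' & Ex), (G y) as (y' & Hy' & Ey); cbn.
    rewrite Hrel, Hrel', Ex, Ey by assumption. reflexivity.
Qed.

Definition has_least {T} (r : T -> T -> Prop) : Prop :=
  exists t, forall t', t' <> t -> r t t'.

Definition has_least_elt (S : ostr) : Prop :=
  exists x, dom S x /\ forall y, dom S y -> y <> x -> rel S x y.

Lemma has_least_elt_iso_to S T r : iso_to S T r -> (has_least_elt S <-> has_least r).
Proof.
  intros (f & Hinj & Hsurj & Hrel). split.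
  - intros (x & Hx & Hleast). exists (f x). intros t' Hne.
    destruct (Hsurj t') as (y & Hy & <-). apply Hrel; [assumption .. |].
    apply Hleast; [exact Hy | intros ->; contradiction].
  - intros [t Hleast]. destruct (Hsurj t) as (x & Hx & <-). exists x. split; [exact Hx|].
    intros y Hy Hne. apply Hrel; [assumption .. |]. apply Hleast. intros E. apply Hne, Hinj; auto.
Qed.

Lemma has_least_elt_same_diag S S' :
  same_diag S S' -> (has_least_elt S <-> has_least_elt S').
Proof.
  enough (Himpl : forall S S', same_diag S S' -> has_least_elt S -> has_least_elt S')
    by (intros Hd; split; apply Himpl; [exact Hd | now apply same_diag_sym]).
  clear. intros S S' Hd (x & Hx & Hleast). pose proof (same_diag_dom S S' Hd) as Hdom.
  exists x. split; [now apply Hdom|]. intros y Hy Hne. apply Hdom in Hy.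
  apply (same_diag_rel S S' Hd); auto.
Qed.

Lemma has_least_elt_square A : has_least_elt (square A) <-> has_least_elt A.
Proof.
  split.
  - intros (x & (a & b & Ha & Hb & ->) & Hleast). exists a. split; [exact Ha|].
    intros c Hc Hca. assert (Hr : rel (square A) (cpair a b) (cpair c b)).
    { apply Hleast; [now apply dom_square_cpair | intros (? & _)%cpair_inj; auto]. }
    apply rel_square_cpair in Hr as [Hr | [-> _]]; [exact Hr | contradiction].
  - intros (a & Ha & Hleast). exists (cpair a a). split; [now apply dom_square_cpair|].
    intros y (c & d & Hc & Hd & ->) Hne. apply rel_square_cpair.
    destruct (Nat.eq_dec c a) as [-> | Hca]; [right; split; [reflexivity|] | left; auto].
    apply Hleast; [exact Hd | intros ->; contradiction].
Qed.

Lemma class2_iso_iff T1 r1 T2 r2 S S' :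
  has_least r1 -> ~ has_least r2 ->
  class2 T1 r1 T2 r2 S -> class2 T1 r1 T2 r2 S' ->
  (iso S S' <-> (has_least_elt S <-> has_least_elt S')).
Proof.
  intros H1 H2 HS HS'. split.
  - intros Hiso. destruct HS' as [HS' | HS'];
      rewrite (has_least_elt_iso_to _ _ _ HS'),
        (has_least_elt_iso_to _ _ _ (iso_to_iso _ _ _ _ Hiso HS')); tauto.
  - destruct HS as [HS | HS], HS' as [HS' | HS'];
      rewrite (has_least_elt_iso_to _ _ _ HS), (has_least_elt_iso_to _ _ _ HS');
      (intros; eapply iso_of_iso_to; eassumption) || tauto.
Qed.

(** * The order types [omega * n] and [omega^2 * n] *)

Lemma fin_eq n (i i' : fin n) : proj1_sig i = proj1_sig i' -> i = i'.
Proof. destruct i, i'; cbn; intros ->. f_equal. apply proof_irrelevance. Qed.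

Lemma mul_add_lt_iff n k j k' j' : j < n -> j' < n ->
  (k * n + j < k' * n + j' <-> k < k' \/ (k = k' /\ j < j')).
Proof.
  intros Hj Hj'. split.
  - intros H. destruct (lt_eq_lt_dec k k') as [[Hk | ->] | Hk]; [auto | right; lia |].
    assert (k' * n + n <= k * n) by nia. lia.
  - intros [Hk | [-> Hk]]; [|lia]. assert (k * n + n <= k' * n) by nia. lia.
Qed.

Lemma mul_add_eq_iff n k j k' j' : j < n -> j' < n ->
  (k * n + j = k' * n + j' <-> k = k' /\ j = j').
Proof.
  intros Hj Hj'.
  pose proof (mul_add_lt_iff n k j k' j' Hj Hj'). pose proof (mul_add_lt_iff n k' j' k j Hj' Hj).
  lia.
Qed.

Lemma block_eq_iff n (i i' : fin n) (k k' : nat) :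
  (i, k) = (i', k') :> omega_n n <-> proj1_sig i = proj1_sig i' /\ k = k'.
Proof.
  split; [now intros [= -> ->] | intros [Hi ->]; now rewrite (fin_eq n i i' Hi)].
Qed.

(** The point [((i, k), (j, l))] of [(omega * n)^2] is ordered lexicographically by
    [(i, k, j, l)], and so is the point [(i, (k * n + j, l))] of [omega^2 * n]. *)
Definition omega_square_to_omega2 n (p : omega_n n * omega_n n) : omega2_n n :=
  let '((i, k), (j, l)) := p in (i, (k * n + proj1_sig j, l)).

(** In [(omega^* * n)^2] the order is by [i], then decreasing [k], increasing [j] and
    decreasing [l]; reversing [j] lets [k * n + (n - 1 - j)] decrease along with it. *)
Definition omega_star_square_to_omega2 n (p : omega_n n * omega_n n) : omega2_n n :=
  let '((i, k), (j, l)) := p in (i, (k * n + (n - 1 - proj1_sig j), l)).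

Lemma order_iso_omega_square n : 1 <= n ->
  order_iso (lex_rel (omega_n_lt n)) (omega2_n_lt n) (omega_square_to_omega2 n).
Proof.
  intros Hn. split; [|split].
  - intros [[i k] [[j Hj] l]] [[i' k'] [[j' Hj'] l']] [= -> Hm ->].
    apply mul_add_eq_iff in Hm as [-> ->]; [|assumption ..].
    f_equal. f_equal. now apply fin_eq.
  - intros [i [m l]]. assert (Hlt : m mod n < n) by (apply Nat.mod_upper_bound; lia).
    exists ((i, m / n), (exist _ (m mod n) Hlt, l)). cbn.
    now rewrite Nat.mul_comm, <- Nat.div_mod_eq.
  - intros [[i k] [[j Hj] l]] [[i' k'] [[j' Hj'] l']].
    unfold lex_rel, omega_n_lt, omega2_n_lt, lex2; cbn.
    rewrite block_eq_iff, mul_add_lt_iff, mul_add_eq_iff by assumption. cbn. lia.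
Qed.

Lemma order_iso_omega_star_square n : 1 <= n ->
  order_iso (lex_rel (omega_star_n_lt n)) (omega2_star_n_lt n) (omega_star_square_to_omega2 n).
Proof.
  intros Hn. split; [|split].
  - intros [[i k] [[j Hj] l]] [[i' k'] [[j' Hj'] l']] [= -> Hm ->].
    apply mul_add_eq_iff in Hm as [-> Hjj']; [|lia ..].
    f_equal. f_equal. apply fin_eq. cbn. lia.
  - intros [i [m l]]. assert (Hlt : n - 1 - m mod n < n) by lia.
    exists ((i, m / n), (exist _ (n - 1 - m mod n) Hlt, l)). cbn.
    assert (m mod n < n) by (apply Nat.mod_upper_bound; lia).
    replace (n - 1 - (n - 1 - m mod n)) with (m mod n) by lia.
    now rewrite Nat.mul_comm, <- Nat.div_mod_eq.
  - intros [[i k] [[j Hj] l]] [[i' k'] [[j' Hj'] l']].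
    unfold lex_rel, omega_star_n_lt, omega2_star_n_lt, lex2; cbn.
    rewrite block_eq_iff, !mul_add_lt_iff, mul_add_eq_iff by lia. cbn. lia.
Qed.

Lemma omega_n_has_least n : 1 <= n -> has_least (omega_n_lt n).
Proof.
  intros Hn. exists (exist _ 0 Hn, 0). intros [[i Hi] k] Hne. unfold omega_n_lt; cbn.
  destruct i; [|left; lia]. right. split; [reflexivity|].
  destruct k; [|lia]. exfalso. apply Hne. f_equal. now apply fin_eq.
Qed.

Lemma omega_star_n_no_least n : ~ has_least (omega_star_n_lt n).
Proof.
  intros [[i k] Hleast]. specialize (Hleast (i, S k)).
  unfold omega_star_n_lt in Hleast; cbn in Hleast.
  assert ((i, S k) <> (i, k)) as Hne by (intros [= ?]; lia). apply Hleast in Hne. lia.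
Qed.

Lemma omega2_n_has_least n : 1 <= n -> has_least (omega2_n_lt n).
Proof.
  intros Hn. exists (exist _ 0 Hn, (0, 0)). intros [[i Hi] [m l]] Hne.
  unfold omega2_n_lt, lex2; cbn.
  destruct i; [|left; lia]. right. split; [reflexivity|].
  destruct m; [|lia]. destruct l; [|lia]. exfalso. apply Hne. f_equal. now apply fin_eq.
Qed.

Lemma omega2_star_n_no_least n : ~ has_least (omega2_star_n_lt n).
Proof.
  intros [[i [m l]] Hleast]. specialize (Hleast (i, (m, S l))).
  unfold omega2_star_n_lt, lex2 in Hleast; cbn in Hleast.
  assert ((i, (m, S l)) <> (i, (m, l))) as Hne by (intros [= ?]; lia). apply Hleast in Hne. lia.
Qed.

Lemma square_class2 n A : 1 <= n ->
  class2 (omega_n n) (omega_n_lt n) (omega_n n) (omega_star_n_lt n) A ->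
  class2 (omega2_n n) (omega2_n_lt n) (omega2_n n) (omega2_star_n_lt n) (square A).
Proof.
  intros Hn [HA | HA]; [left | right]; eapply iso_to_order_iso; try apply iso_to_square, HA.
  - now apply order_iso_omega_square.
  - now apply order_iso_omega_star_square.
Qed.

Theorem theorem3p1 : forall n : nat, 1 <= n ->
  comp_leq (class2 (omega_n n) (omega_n_lt n) (omega_n n) (omega_star_n_lt n))
           (class2 (omega2_n n) (omega2_n_lt n) (omega2_n n) (omega2_star_n_lt n)).
Proof.
  intros n Hn. exists square_operator. split; [exact ce_square_operator | split].
  - intros A HA. exists (square A).
    split; [now apply square_class2 | exact (enum_square_operator A)].
  - intros A B A' B' HA HB HA' HB'.
    apply same_diag_enum_square in HA', HB'.
    rewrite (class2_iso_iff _ _ _ _ A B (omega_n_has_least n Hn) (omega_star_n_no_least n) HA HB).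
    rewrite (class2_iso_iff _ _ _ _ A' B' (omega2_n_has_least n Hn) (omega2_star_n_no_least n)
               (class2_same_diag _ _ _ _ _ _ HA' (square_class2 n A Hn HA))
               (class2_same_diag _ _ _ _ _ _ HB' (square_class2 n B Hn HB))).
    now rewrite <- (has_least_elt_same_diag _ _ HA'), <- (has_least_elt_same_diag _ _ HB'),
      !has_least_elt_square.
Qed.
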